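(* Let $p_1$ and $p_2$ be probability densities on $\mathbb{R}^n$ and $\omega\in[0,1]$. Define the unnormalized harmonic mean $\mathcal{M}^h_\omega\{p_1,p_2\}(\mathbf{x})=\frac{p_1(\mathbf{x})p_2(\mathbf{x})}{(1-\omega)p_1(\mathbf{x})+\omega p_2(\mathbf{x})}$, its normalization constant $\zeta^h=\int_{\mathbb{R}^n}\mathcal{M}^h_\omega\{p_1,p_2\}(\mathbf{x})\,d\mathbf{x}$ (assumed positive), and the harmonic mean density $\mathbf{M}^h_\omega\{p_1,p_2\}=\mathcal{M}^h_\omega\{p_1,p_2\}/\zeta^h$. Then for every $\mathbf{x}\in\mathbb{R}^n$, \[ \min\{p_1(\mathbf{x}),p_2(\mathbf{x})\}\le \mathbf{M}^h_\omega\{p_1,p_2\}(\mathbf{x}), \] i.e. the harmonic mean density is bounded from below by the pointwise minimum of the component densities.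
   Context: The quotient defining $\mathcal{M}^h_\omega$ is taken to be $0$ at points where its numerator vanishes. *)

From HB Require Import structures.
From mathcomp Require Import all_boot all_order all_algebra.
From mathcomp Require Import all_classical all_reals all_analysis.
Set Implicit Arguments. Unset Strict Implicit. Unset Printing Implicit Defensive.
Import Order.TTheory GRing.Theory Num.Theory.
Local Open Scope classical_set_scope.
Local Open Scope ring_scope.

Definition is_density (d : measure_display) (T : measurableType d) (R : realType)
  (mu : {measure set T -> \bar R}) (p : T -> R) : Prop :=
  [/\ measurable_fun [set: T] p,
      (forall x, 0 <= p x) &
      (\int[mu]_x (p x)%:E = 1)%E].

Definition hmean_unnorm (T : Type) (R : realType) (w : R) (p1 p2 : T -> R) (x : T) : R :=
  if p1 x * p2 x == 0 then 0
  else p1 x * p2 x / ((1 - w) * p1 x + w * p2 x).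

Definition hmean_zeta (d : measure_display) (T : measurableType d) (R : realType)
  (mu : {measure set T -> \bar R}) (w : R) (p1 p2 : T -> R) : \bar R :=
  (\int[mu]_x (hmean_unnorm w p1 p2 x)%:E)%E.

Definition hmean_density (d : measure_display) (T : measurableType d) (R : realType)
  (mu : {measure set T -> \bar R}) (w : R) (p1 p2 : T -> R) (x : T) : R :=
  hmean_unnorm w p1 p2 x / fine (hmean_zeta mu w p1 p2).

From HB Require Import structures.
From mathcomp Require Import all_boot all_order all_algebra.
From mathcomp Require Import all_classical all_reals all_analysis.
From mathcomp Require Import ring measurable_realfun.
Import Order.TTheory GRing.Theory Num.Theory.
Local Open Scope classical_set_scope.
Local Open Scope ring_scope.

(* The weighted harmonic mean lies above the minimum of its arguments and below
   the weighted arithmetic mean (with the weights swapped).  The latter bound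
   makes zeta^h at most the integral of a mixture of the two densities, i.e. at
   most 1, so normalizing can only increase the unnormalized mean, which by the
   former bound already dominates min(p1, p2). *)

Definition wharmonic {R : fieldType} (w a b : R) : R :=
  a * b / ((1 - w) * a + w * b).

Section WeightedHarmonicMean.
Context {R : realFieldType}.
Implicit Types w a b : R.

Lemma wharmonicC w a b : wharmonic w a b = wharmonic (1 - w) b a.
Proof. by rewrite /wharmonic; congr (_ / _); ring. Qed.

Lemma wharmonic_ge0 w a b :
  0 <= w <= 1 -> 0 <= a -> 0 <= b -> 0 <= wharmonic w a b.
Proof.
move=> /andP[w_ge0 w_le1] a_ge0 b_ge0.
have w'_ge0 : 0 <= 1 - w by rewrite subr_ge0.
by rewrite divr_ge0 ?addr_ge0 ?mulr_ge0.
Qed.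

Lemma wharmonic_ge_min w a b :
  0 <= w <= 1 -> 0 <= a -> 0 <= b -> Num.min a b <= wharmonic w a b.
Proof.
wlog le_ab : w a b / a <= b.
  move=> le_min_wlog w01 a_ge0 b_ge0.
  have /orP[le_ab|le_ba] := le_total a b; first exact: le_min_wlog.
  have w01' : 0 <= 1 - w <= 1.
    by case/andP: w01 => w_ge0 w_le1; rewrite subr_ge0 gerBl w_ge0 w_le1.
  by rewrite minC wharmonicC le_min_wlog.
move=> w01 a_ge0 b_ge0; rewrite (min_idPl le_ab).
have [<-|a_gt0] := eqVneq 0 a; first exact: wharmonic_ge0.
have {}a_gt0 : 0 < a by rewrite lt0r eq_sym a_gt0.
case/andP: w01 => w_ge0 w_le1.
have D_eq : (1 - w) * a + w * b = a + w * (b - a) by ring.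
have ba_ge0 : 0 <= b - a by rewrite subr_ge0.
have le_aD : a <= (1 - w) * a + w * b by rewrite D_eq lerDl mulr_ge0.
have le_Db : (1 - w) * a + w * b <= b.
  by rewrite D_eq addrC -lerBrDr ler_piMl.
by rewrite /wharmonic ler_pdivlMr ?(lt_le_trans a_gt0) // ler_pM2l.
Qed.

Lemma wharmonic_le_mean w a b :
  0 <= w <= 1 -> 0 <= a -> 0 <= b -> wharmonic w a b <= w * a + (1 - w) * b.
Proof.
move=> /andP[w_ge0 w_le1] a_ge0 b_ge0.
have w'_ge0 : 0 <= 1 - w by rewrite subr_ge0.
have mean_ge0 : 0 <= w * a + (1 - w) * b by rewrite addr_ge0 ?mulr_ge0.
have D_ge0 : 0 <= (1 - w) * a + w * b by rewrite addr_ge0 ?mulr_ge0.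
rewrite /wharmonic; have [->|D_neq0] := eqVneq ((1 - w) * a + w * b) 0.
  by rewrite invr0 mulr0.
rewrite ler_pdivrMr ?lt0r ?D_neq0 //.
have -> : (w * a + (1 - w) * b) * ((1 - w) * a + w * b)
          = a * b + w * (1 - w) * (a - b) ^+ 2 by ring.
by rewrite lerDl; apply: mulr_ge0; [exact: mulr_ge0 | exact: sqr_ge0].
Qed.

End WeightedHarmonicMean.

Lemma hmean_unnormE {T : Type} {R : realType} (w : R) (p1 p2 : T -> R) x :
  hmean_unnorm w p1 p2 x = wharmonic w (p1 x) (p2 x).
Proof. by rewrite /hmean_unnorm /wharmonic; case: eqP => [->|]; rewrite ?mul0r. Qed.

Lemma measurable_invr (R : realType) : measurable_fun [set: R] GRing.inv.
Proof.
have -> : GRing.inv = (fun x : R => if x == 0 then 0 else x^-1).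
  by apply/funext => x; case: eqP => [->|]; rewrite ?invr0.
apply: measurable_fun_if => //.
- apply: (measurable_fun_eqr (f := id) (g := cst 0)).
  + exact: measurable_id.
  + exact: measurable_cst.
- rewrite setTI.
  have -> : (fun x : R => x == 0) @^-1` [set false] = [set x | x != 0].
    by apply/seteqP; split => x /=; case: eqP.
  apply: open_continuous_measurable_fun; first exact: open_neq.
  by move=> x; rewrite inE => x_neq0; exact: inv_continuous.
Qed.

Lemma measurable_wharmonic d (T : measurableType d) (R : realType)
  (D : set T) (f g : T -> R) (w : R) : measurable D ->
  measurable_fun D f -> measurable_fun D g ->
  measurable_fun D (fun x => wharmonic w (f x) (g x)).
Proof.
move=> mD mf mg; apply: measurable_funM; first exact: measurable_funM.
apply: (measurableT_comp (@measurable_invr R)) => //.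
by apply: measurable_funD; apply: measurable_funM => //; exact: measurable_cst.
Qed.

Section Densities.
Context {d : measure_display} {T : measurableType d} {R : realType}.
Context {mu : {measure set T -> \bar R}} {f g : T -> R} {w : R}.

Lemma is_density_mixture : is_density mu f -> is_density mu g -> 0 <= w <= 1 ->
  is_density mu (fun x => w * f x + (1 - w) * g x).
Proof.
move=> [mf f_ge0 intf] [mg g_ge0 intg] /andP[w_ge0 w_le1].
have w'_ge0 : 0 <= 1 - w by rewrite subr_ge0.
have mwf : measurable_fun [set: T] (fun x => w * f x).
  by apply: measurable_funM => //; exact: measurable_cst.
have mwg : measurable_fun [set: T] (fun x => (1 - w) * g x).
  by apply: measurable_funM => //; exact: measurable_cst.
split; first exact: measurable_funD.
  by move=> x; rewrite addr_ge0 ?mulr_ge0.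
under eq_integral do rewrite EFinD.
rewrite ge0_integralD //; try by move=> x _; rewrite lee_fin mulr_ge0.
- under eq_integral do rewrite EFinM.
  under [X in (_ + X)%E]eq_integral do rewrite EFinM.
  rewrite !ge0_integralZl ?intf ?intg //; try exact/measurable_EFinP.
  + by rewrite !mule1 -EFinD addrC subrK.
  + by move=> x _; rewrite lee_fin.
  + by move=> x _; rewrite lee_fin.
- exact/measurable_EFinP.
- exact/measurable_EFinP.
Qed.

Lemma hmean_zeta_le1 : is_density mu f -> is_density mu g -> 0 <= w <= 1 ->
  (hmean_zeta mu w f g <= 1)%E.
Proof.
move=> df dg w01; have [mf f_ge0 _] := df; have [mg g_ge0 _] := dg.
have [mmix _ <-] := is_density_mixture df dg w01.
apply: ge0_le_integral => //.
- by move=> x _; rewrite lee_fin hmean_unnormE wharmonic_ge0.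
- apply/measurable_EFinP; rewrite (funext (hmean_unnormE w f g)).
  by apply: measurable_wharmonic.
- exact/measurable_EFinP.
- by move=> x _; rewrite lee_fin hmean_unnormE wharmonic_le_mean.
Qed.

End Densities.

Theorem theorem3 (R : realType) (d : measure_display) (T : measurableType d)
  (mu : {measure set T -> \bar R}) (p1 p2 : T -> R) (w : R) :
  is_density mu p1 -> is_density mu p2 ->
  0 <= w <= 1 ->
  (0 < hmean_zeta mu w p1 p2)%E ->
  forall x : T, Num.min (p1 x) (p2 x) <= hmean_density mu w p1 p2 x.
Proof.
move=> dp1 dp2 w01 zeta_gt0 x.
have [_ p1_ge0 _] := dp1; have [_ p2_ge0 _] := dp2.
have h_ge0 : 0 <= wharmonic w (p1 x) (p2 x) by apply: wharmonic_ge0.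
have min_le_h : Num.min (p1 x) (p2 x) <= wharmonic w (p1 x) (p2 x).
  by apply: wharmonic_ge_min.
move: zeta_gt0 (hmean_zeta_le1 dp1 dp2 w01).
rewrite /hmean_density hmean_unnormE.
case: (hmean_zeta mu w p1 p2) => [z| |] //=; rewrite lte_fin lee_fin => z_gt0 z_le1.
by rewrite (le_trans min_le_h) // ler_pdivlMr // ler_piMr.
Qed.
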